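(* Let $m,n\ge1$ and consider the product of simplices $\Delta^{m-1}\times\Delta^{n-1}\subset\mathbb{R}^m\times\mathbb{R}^n$. Given any subdivision of the vertices of $\Delta^{m-1}\times\Delta^{n-1}$ and any interior cell $C$ of this subdivision, there exist positive real weights $w_1,\dots,w_m$ with $\sum_i w_i=1$ such that $C$ contains the point $(w_1,\dots,w_m,\tfrac1n\mathbf{1}_n)$ in its relative interior.
   Context: $\Delta^{k-1}=\mathrm{conv}(e_1,\dots,e_k)\subset\mathbb{R}^k$ is the standard simplex, so the vertices of $\Delta^{m-1}\times\Delta^{n-1}$ are the points $(e_i,e_j)$. A subdivision of the vertices is a polyhedral subdivision of $\Delta^{m-1}\times\Delta^{n-1}$ whose cells are convex hulls of subsets of these vertices (cells cover the product, and any two intersect in a common face). A cell is interior if it is not contained in any facet of $\Delta^{m-1}\times\Delta^{n-1}$. $\mathbf{1}_n$ is the all-ones vector. *)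

From HB Require Import structures.
From mathcomp Require Import all_boot all_order all_algebra.
From mathcomp Require Import reals.
Set Implicit Arguments. Unset Strict Implicit. Unset Printing Implicit Defensive.
Import Order.TTheory GRing.Theory Num.Theory.
Local Open Scope ring_scope.

(* Points of R^m x R^n are row vectors of length m + n: (x, y) = row_mx x y. *)
Section ProductOfSimplices.
Variables (R : realType) (m n : nat).

Definition pt := 'rV[R]_(m + n).
Definition ptset := pt -> Prop.

Definition pvert (v : 'I_m * 'I_n) : pt :=
  row_mx (delta_mx 0 v.1) (delta_mx 0 v.2).

Definition pconv (S : {set 'I_m * 'I_n}) : ptset := fun x =>
  exists l : 'I_m * 'I_n -> R,
    [/\ forall v, 0 <= l v,
        forall v, v \notin S -> l v = 0,
        \sum_v l v = 1
      & x = \sum_v l v *: pvert v].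

Definition prodsimp : ptset := pconv setT.

Definition pdot (a x : pt) : R := \sum_k a 0 k * x 0 k.

Definition psubset (A B : ptset) : Prop := forall x, A x -> B x.

(* F is a face of the convex set P: intersection of P with a supporting
   (weakly valid) hyperplane; includes the empty face and P itself. *)
Definition is_face (P F : ptset) : Prop :=
  exists (a : pt) (b : R),
    (forall x, P x -> pdot a x <= b) /\
    (forall x, F x <-> (P x /\ pdot a x = b)).

Definition is_facet (P F : ptset) : Prop :=
  [/\ is_face P F,
      exists x, P x /\ ~ F x
    & forall G, is_face P G -> psubset F G -> (exists x, P x /\ ~ G x) ->
        psubset G F].

Definition is_vertex_subdivision (cells : {set {set 'I_m * 'I_n}}) : Prop :=
  (forall x, prodsimp x <-> exists2 S, S \in cells & pconv S x) /\
  (forall S1 S2, S1 \in cells -> S2 \in cells ->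
     is_face (pconv S1) (fun x => pconv S1 x /\ pconv S2 x) /\
     is_face (pconv S2) (fun x => pconv S1 x /\ pconv S2 x)).

Definition interior_cell (S : {set 'I_m * 'I_n}) : Prop :=
  forall F, is_facet prodsimp F -> ~ psubset (pconv S) F.

(* Relative interior: p lies in conv S and some neighbourhood of p (in the
   sup norm) inside the affine hull of conv S (= affine combinations of the
   vertices in S) is contained in conv S. *)
Definition in_relint (S : {set 'I_m * 'I_n}) (p : pt) : Prop :=
  pconv S p /\
  exists2 eps : R, 0 < eps &
    forall mu : 'I_m * 'I_n -> R,
      (forall v, v \notin S -> mu v = 0) ->
      \sum_v mu v = 1 ->
      (forall k, `|(\sum_v mu v *: pvert v) 0 k - p 0 k| < eps) ->
      pconv S (\sum_v mu v *: pvert v).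

End ProductOfSimplices.

From Pilot Require Import Defs.
From mathcomp Require Import all_boot all_order all_algebra.
From mathcomp Require Import reals.
From mathcomp Require Import ring lra.
Import Order.TTheory GRing.Theory Num.Theory.
Local Open Scope ring_scope.
Set Implicit Arguments. Unset Strict Implicit. Unset Printing Implicit Defensive.

(* An interior cell C meets every facet {x_i = 0} and {y_j = 0} of the
   product, so every row i and every column j of the grid 'I_m * 'I_n contains
   a vertex of C.  Give each vertex (i, j) of C the weight 1 / (n d_j), where
   d_j is the number of vertices of C in column j: every column then carries
   total weight 1/n, which makes the second factor (1/n) 1, and every row
   carries positive weight.  A convex combination that is positive on all of
   C lies in the relative interior of conv C, because the coefficients of a
   nearby affine combination can be corrected by a uniformly small amount,
   through a fixed pseudo-inverse. *)

Lemma finset_pos_lower_bound (R : realDomainType) (T : finType) (A : {set T})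
    (f : T -> R) :
  (forall v, v \in A -> 0 < f v) -> exists2 c, 0 < c & forall v, v \in A -> c <= f v.
Proof.
move=> fA; exists (\big[Order.min/1]_(v in A) f v).
  by elim/big_ind: _ => [|x y x0 y0|v /fA]; rewrite ?lt_min ?x0 ?y0 ?ltr01.
by move=> v vA; rewrite (bigD1 v) //= ge_min lexx.
Qed.

Lemma exists_ord_neq (p : nat) (i : 'I_p) : (1 < p)%N -> exists i' : 'I_p, i' != i.
Proof.
move=> p1; have p0 : (0 < p)%N by apply: ltn_trans p1.
case: (eqVneq i (Ordinal p0)) => [->|ne]; last by exists (Ordinal p0); rewrite eq_sym.
by exists (Ordinal p1).
Qed.

Lemma ord_size1 (p : nat) (i j : 'I_p) : p = 1%N -> i = j.
Proof. by move: i j => + + p1; rewrite p1 => i j; rewrite !ord1. Qed.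

Section BoundedPreimage.
Variables (R : numFieldType) (T : finType) (p : nat) (f : T -> 'rV[R]_p).
Variable C : {set T}.

Lemma bounded_preimage : exists2 K : R, 0 <= K &
  forall d : T -> R, (forall v, v \notin C -> d v = 0) ->
  exists d' : T -> R, [/\ forall v, v \notin C -> d' v = 0,
    \sum_v d' v *: f v = \sum_v d v *: f v &
    forall v, `|d' v| <= K * \sum_k `|(\sum_v d v *: f v) 0 k|].
Proof.
pose A : 'M[R]_(#|T|, p) := \matrix_r ((enum_val r \in C)%:R *: f (enum_val r)).
have combA (c : T -> R) : (forall v, v \notin C -> c v = 0) ->
    \sum_v c v *: f v = (\row_r c (enum_val r)) *m A.
  move=> c0; rewrite mulmx_sum_row (reindex _ (onW_bij _ (enum_val_bij T))) /=.
  apply: eq_bigr => r _; rewrite rowK mxE scalerA.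
  by case: (boolP (enum_val r \in C)) => h; rewrite ?mulr1 // c0 // !mul0r !scale0r.
(* [pinvmx A] inverts [A] on its row space, linearly hence boundedly. *)
pose P := pinvmx A.
exists (\sum_r \sum_k `|P k r|); first by do 2 (apply: sumr_ge0 => ? _).
move=> d d0; set x := \sum_v d v *: f v.
have xA : (x <= A)%MS by rewrite /x (combA d d0) submxMl.
pose d' v := (v \in C)%:R * (x *m P) 0 (enum_rank v).
have d'0 v : v \notin C -> d' v = 0 by move/negbTE; rewrite /d' => ->; rewrite mul0r.
exists d'; split => //.
  rewrite (combA _ d'0) -[RHS](mulmxKpV xA).
  rewrite [LHS]mulmx_sum_row [RHS]mulmx_sum_row; apply: eq_bigr => r _.
  rewrite rowK mxE /d' enum_valK.
  by case: (enum_val r \in C); rewrite /= ?mul1r ?mul0r ?scale0r ?scaler0.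
move=> v; set r := enum_rank v.
apply: le_trans (_ : `|(x *m P) 0 r| <= _).
  by rewrite /d'; case: (v \in C); rewrite /= ?mul1r ?mul0r ?normr0 ?normr_ge0.
rewrite mxE mulr_sumr; apply: le_trans (ler_norm_sum _ _ _) _.
apply: ler_sum => k _; rewrite normrM mulrC ler_wpM2r //.
rewrite (bigD1 r) //= (bigD1 k) //=.
by rewrite -addrA ler_wpDr // addr_ge0 // !sumr_ge0 // => *; rewrite ?sumr_ge0.
Qed.

End BoundedPreimage.

Section ProductOfSimplices.
Variables (R : realType) (m n : nat).
Local Notation V := ('I_m * 'I_n)%type.
Local Notation pvert := (@pvert R m n).
Local Notation pdot := (@pdot R m n).
Local Notation pconv := (@pconv R m n).
Local Notation prodsimp := (@prodsimp R m n).

Lemma pvert_lshift (v : V) i : pvert v 0 (lshift n i) = (v.1 == i)%:R.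
Proof. by rewrite /Defs.pvert row_mxEl mxE eqxx /= eq_sym. Qed.

Lemma pvert_rshift (v : V) j : pvert v 0 (rshift m j) = (v.2 == j)%:R.
Proof. by rewrite /Defs.pvert row_mxEr mxE eqxx /= eq_sym. Qed.

Lemma pvert_ge0 v k : 0 <= pvert v 0 k.
Proof.
by rewrite -[k]splitK; case: split => a; rewrite ?pvert_lshift ?pvert_rshift ler0n.
Qed.

Lemma pvert_exchange i i' j j' :
  pvert (i, j) + pvert (i', j') = pvert (i, j') + pvert (i', j).
Proof. by rewrite /Defs.pvert !add_row_mx [delta_mx 0 j + _]addrC. Qed.

Lemma sum_pairE (F : V -> R) : \sum_v F v = \sum_i \sum_j F (i, j).
Proof. by rewrite pair_bigA; apply: eq_bigr => -[]. Qed.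

Lemma comb_pvert_coord (c : V -> R) k :
  (\sum_v c v *: pvert v) 0 k = \sum_v c v * pvert v 0 k.
Proof. by rewrite summxE; apply: eq_bigr => v _; rewrite mxE. Qed.

Lemma comb_pvertE (c : V -> R) :
  \sum_v c v *: pvert v =
  row_mx (\row_i \sum_j c (i, j)) (\row_j \sum_i c (i, j)).
Proof.
apply/rowP => k; rewrite comb_pvert_coord sum_pairE -[k]splitK.
case: split => a; rewrite ?row_mxEl ?row_mxEr mxE.
  under eq_bigr do under eq_bigr do rewrite pvert_lshift /=.
  rewrite (bigD1 a) //= [X in _ + X]big1 ?addr0.
    by apply: eq_bigr => j _; rewrite eqxx mulr1.
  by move=> i /negbTE ia; apply: big1 => j _; rewrite ia mulr0.
rewrite exchange_big /=.
under eq_bigr do under eq_bigr do rewrite pvert_rshift /=.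
rewrite (bigD1 a) //= [X in _ + X]big1 ?addr0.
  by apply: eq_bigr => i _; rewrite eqxx mulr1.
by move=> j /negbTE ja; apply: big1 => i _; rewrite ja mulr0.
Qed.

Lemma comb_pvert_rsum (c : V -> R) :
  \sum_j (\sum_v c v *: pvert v) 0 (rshift m j) = \sum_v c v.
Proof.
rewrite comb_pvertE sum_pairE exchange_big /=.
by apply: eq_bigr => j _; rewrite row_mxEr mxE.
Qed.

Lemma pdotD a x y : pdot a (x + y) = pdot a x + pdot a y.
Proof. by rewrite /Defs.pdot -big_split; apply: eq_bigr => k _; rewrite mxE mulrDr. Qed.

Lemma pdot_comb a (c : V -> R) :
  pdot a (\sum_v c v *: pvert v) = \sum_v c v * pdot a (pvert v).
Proof.
rewrite /Defs.pdot; under eq_bigr do rewrite comb_pvert_coord mulr_sumr.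
rewrite exchange_big; apply: eq_bigr => v _; rewrite mulr_sumr.
by apply: eq_bigr => k _; rewrite mulrCA.
Qed.

Lemma pvert_in_pconv (S : {set V}) v : v \in S -> pconv S (pvert v).
Proof.
move=> vS; exists (fun u => (u == v)%:R); split.
- by move=> u; rewrite ler0n.
- by move=> u; apply: contraNeq => /eqP; case: eqP => // ->.
- by rewrite (bigD1 v) //= eqxx big1 ?addr0 // => u /negbTE ->.
- by rewrite (bigD1 v) //= eqxx scale1r big1 ?addr0 // => u /negbTE ->; rewrite scale0r.
Qed.

Lemma prodsimp_pvert v : prodsimp (pvert v).
Proof. exact: pvert_in_pconv (in_setT v). Qed.

Lemma pconv_prodsimp (S : {set V}) x : pconv S x -> prodsimp x.
Proof. by case=> l [l0 _ l1 ->]; exists l; split => // v; rewrite inE. Qed.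

Lemma prodsimp_coord_ge0 x k : prodsimp x -> 0 <= x 0 k.
Proof.
case=> l [l0 _ _ ->]; rewrite comb_pvert_coord.
by apply: sumr_ge0 => v _; rewrite mulr_ge0 ?pvert_ge0.
Qed.

Lemma tight_on_support a b (l : V -> R) :
  (forall v, pdot a (pvert v) <= b) -> (forall v, 0 <= l v) -> \sum_v l v = 1 ->
  pdot a (\sum_v l v *: pvert v) = b ->
  forall v, l v != 0 -> pdot a (pvert v) = b.
Proof.
move=> valid l0 l1 tight.
have slack0 : \sum_v l v * (b - pdot a (pvert v)) = 0.
  by rewrite (eq_bigr _ (fun v _ => mulrBr _ _ _)) sumrB -mulr_suml l1 mul1r
             -pdot_comb tight subrr.
have slack_ge0 v : true -> 0 <= l v * (b - pdot a (pvert v)).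
  by rewrite mulr_ge0 ?subr_ge0.
move=> v; have /eqP := psumr_eq0P slack_ge0 slack0 (i := v) isT.
by rewrite mulf_eq0 subr_eq0 => /orP[->|/eqP <-].
Qed.

Definition coord_zero k : ptset R m n := fun x => prodsimp x /\ x 0 k = 0.

Lemma pdotN_delta k x : pdot (- delta_mx 0 k) x = - x 0 k.
Proof.
rewrite /Defs.pdot (bigD1 k) //= big1 ?addr0 ?mxE ?eqxx ?mulN1r //.
by move=> k' /negbTE nk; rewrite !mxE nk oppr0 mul0r.
Qed.

Lemma is_face_coord_zero k : is_face prodsimp (coord_zero k).
Proof.
exists (- delta_mx 0 k), 0; split => [x Px|x].
  by rewrite pdotN_delta oppr_le0 prodsimp_coord_ge0.
rewrite pdotN_delta; split=> -[Px x0]; split => //; first by rewrite x0 oppr0.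
by apply/eqP; rewrite -oppr_eq0 x0.
Qed.

Lemma is_facet_coord_zero k v0 : pvert v0 0 k != 0 ->
  (forall u w, pvert u 0 k != 0 -> pvert w 0 k != 0 -> u = w \/
     exists z z', [/\ pvert z 0 k = 0, pvert z' 0 k = 0
                     & pvert u + pvert z' = pvert w + pvert z]) ->
  is_facet prodsimp (coord_zero k).
Proof.
move=> v0k exchange; split; first exact: is_face_coord_zero.
  by exists (pvert v0); split; [exact: prodsimp_pvert | case=> _ /eqP; apply/negP].
move=> G [a [b [valid HG]]] FG [y [Py nGy]] x Gx.
pose f v := pdot a (pvert v).
have fle v : f v <= b by apply/valid/prodsimp_pvert.
have fz z : pvert z 0 k = 0 -> f z = b.
  by move=> z0; case/HG: (FG _ (conj (prodsimp_pvert z) z0)).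
have [u fu] : exists u, f u < b.
  case: (boolP [exists u, f u < b]) => [/existsP//|/existsPn nu].
  exfalso; apply: nGy; apply/HG; split => //; case: (Py) => l [_ _ l1 ->].
  rewrite pdot_comb (eq_bigr (fun v => l v * b)) => [|v _].
    by rewrite -mulr_suml l1 mul1r.
  by congr (_ * _); apply/eqP; rewrite eq_le fle leNgt nu.
(* The exchange relation transfers [f u < b] to every vertex off the face. *)
have fw w : pvert w 0 k != 0 -> f w < b.
  have uk : pvert u 0 k != 0 by apply: contraTneq fu => /fz ->; rewrite ltxx.
  move=> wk; case: (exchange u w uk wk) => [<- //|[z [z' [z0 z'0 e]]]].
  have : f u + f z' = f w + f z by rewrite /f -!pdotD e.
  by rewrite (fz z) // (fz z') // => /addIr <-.
have [Px xb] := (HG x).1 Gx; split => //; case: (Px) => l [l0 _ l1 xE].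
rewrite xE comb_pvert_coord big1 // => v _.
have [->|vk] := eqVneq (pvert v 0 k) 0; first by rewrite mulr0.
have [->|lv] := eqVneq (l v) 0; first by rewrite mul0r.
by move: (fw v vk); rewrite /f (tight_on_support fle l0 l1 _ lv) ?ltxx // -xE.
Qed.

(* For m = 1 < n the face {x_i = 0} is empty, hence not maximal. *)
Lemma is_facet_row i : (0 < n)%N -> (1 < m)%N || (n == 1)%N ->
  is_facet prodsimp (coord_zero (lshift n i)).
Proof.
move=> n0 mn; apply: (@is_facet_coord_zero _ (i, Ordinal n0)).
  by rewrite pvert_lshift eqxx oner_eq0.
move=> [u1 u2] [w1 w2]; rewrite !pvert_lshift !pnatr_eq0 !eqb0 !negbK /=.
move=> /eqP-> /eqP->; case/orP: mn => [/(exists_ord_neq i) [i' i'i]|/eqP n1].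
  right; exists (i', u2), (i', w2).
  by rewrite !pvert_lshift /= (negbTE i'i) pvert_exchange.
by left; rewrite (ord_size1 u2 w2 n1).
Qed.

Lemma is_facet_col j : (0 < m)%N -> (1 < n)%N || (m == 1)%N ->
  is_facet prodsimp (coord_zero (rshift m j)).
Proof.
move=> m0 nm; apply: (@is_facet_coord_zero _ (Ordinal m0, j)).
  by rewrite pvert_rshift eqxx oner_eq0.
move=> [u1 u2] [w1 w2]; rewrite !pvert_rshift !pnatr_eq0 !eqb0 !negbK /=.
move=> /eqP-> /eqP->; case/orP: nm => [/(exists_ord_neq j) [j' j'j]|/eqP m1].
  right; exists (u1, j'), (w1, j').
  by rewrite !pvert_rshift /= (negbTE j'j) addrC pvert_exchange addrC.
by left; rewrite (ord_size1 u1 w1 m1).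
Qed.

Lemma interior_cell_meets_facet (C : {set V}) k : interior_cell R C ->
  is_facet prodsimp (coord_zero k) -> exists2 v, v \in C & pvert v 0 k != 0.
Proof.
move=> Cint Fk.
have [/exists_inP //|/exists_inPn Ck] := boolP [exists v in C, pvert v 0 k != 0].
case: (Cint _ Fk) => x Cx; split; first exact: pconv_prodsimp Cx.
case: Cx => l [_ lC _ ->]; rewrite comb_pvert_coord big1 // => v _.
have [vC|/lC->] := boolP (v \in C); last by rewrite mul0r.
by move/negPn/eqP: (Ck v vC) => ->; rewrite mulr0.
Qed.

Lemma interior_cell_row (C : {set V}) i : (0 < m)%N -> (0 < n)%N -> interior_cell R C ->
  exists j, (i, j) \in C.
Proof.
move=> m0 n0 Cint; have [mn|] := boolP ((1 < m)%N || (n == 1)%N).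
  have [[i' j] ijC] := interior_cell_meets_facet Cint (is_facet_row i n0 mn).
  by rewrite pvert_lshift pnatr_eq0 eqb0 negbK => /eqP /= i'i; exists j; rewrite -i'i.
rewrite negb_or -leqNgt => /andP [m_le1 _].
have m1 : m = 1%N by apply/eqP; rewrite eqn_leq m_le1 m0.
have nm : (1 < n)%N || (m == 1)%N by rewrite m1 eqxx orbT.
have [[i' j] ijC _] := interior_cell_meets_facet Cint (is_facet_col (Ordinal n0) m0 nm).
by exists j; rewrite (ord_size1 i i' m1).
Qed.

Lemma interior_cell_col (C : {set V}) j : (0 < m)%N -> (0 < n)%N -> interior_cell R C ->
  exists i, (i, j) \in C.
Proof.
move=> m0 n0 Cint; have [nm|] := boolP ((1 < n)%N || (m == 1)%N).
  have [[i j'] ijC] := interior_cell_meets_facet Cint (is_facet_col j m0 nm).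
  by rewrite pvert_rshift pnatr_eq0 eqb0 negbK => /eqP /= j'j; exists i; rewrite -j'j.
rewrite negb_or -leqNgt => /andP [n_le1 _].
have n1 : n = 1%N by apply/eqP; rewrite eqn_leq n_le1 n0.
have mn : (1 < m)%N || (n == 1)%N by rewrite n1 eqxx orbT.
have [[i j'] ijC _] := interior_cell_meets_facet Cint (is_facet_row (Ordinal m0) n0 mn).
by exists i; rewrite (ord_size1 j j' n1).
Qed.

Lemma in_relint_pos_comb (C : {set V}) (lam : V -> R) :
  (forall v, v \in C -> 0 < lam v) -> (forall v, v \notin C -> lam v = 0) ->
  \sum_v lam v = 1 -> in_relint C (\sum_v lam v *: pvert v).
Proof.
move=> lamC lam0 lam1.
have lam_ge0 v : 0 <= lam v by have [/lamC/ltW|/lam0->] := boolP (v \in C).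
split; first by exists lam.
have [c c0 c_le] := finset_pos_lower_bound lamC.
have [K K0 HK] := bounded_preimage pvert C.
pose s : R := (m + n)%:R * K.
have s0 : 0 <= s by rewrite mulr_ge0.
pose eps := c / (s + 1). (* so that K (m + n) eps < c *)
exists eps; first by rewrite divr_gt0 // ltr_wpDl.
move=> mu mu0 mu1 close.
set q := \sum_v mu v *: pvert v; set p := \sum_v lam v *: pvert v.
pose d v := mu v - lam v.
have d0 v : v \notin C -> d v = 0 by move=> vC; rewrite /d mu0 // lam0 // subr0.
have dE : \sum_v d v *: pvert v = q - p.
  by rewrite -sumrB; apply: eq_bigr => v _; rewrite scalerBl.
have [d' [d'0 d'E d'_le]] := HK d d0.
have d'_small v : `|d' v| < c.
  apply: le_lt_trans (d'_le v) _; rewrite dE.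
  apply: le_lt_trans (_ : K * ((m + n)%:R * eps) < c).
    rewrite ler_wpM2l //; apply: le_trans (_ : _ <= \sum_(k < m + n) eps) _.
      by apply: ler_sum => k _; rewrite !mxE ltW.
    by rewrite sumr_const card_ord mulr_natl.
  have -> : K * ((m + n)%:R * eps) = c * (s / (s + 1)).
    by rewrite /eps /s; ring.
  by rewrite gtr_pMr // ltr_pdivrMr ?ltr_wpDl // mul1r ltrDl.
exists (fun v => lam v + d' v); split.
- move=> v; have [vC|vC] := boolP (v \in C); last by rewrite lam0 // d'0 // addr0.
  by have := c_le v vC; have := d'_small v; rewrite ltr_norml; lra.
- by move=> v vC; rewrite lam0 // d'0 // addr0.
- rewrite big_split /= lam1 -(comb_pvert_rsum d') d'E comb_pvert_rsum.
  by rewrite /d sumrB mu1 lam1 subrr addr0.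
- by rewrite (eq_bigr _ (fun v _ => scalerDl _ _ _)) big_split /= d'E dE addrC subrK.
Qed.

Definition col_weight (C : {set V}) (v : V) : R :=
  (v \in C)%:R / (n%:R * \sum_i ((i, v.2) \in C)%:R).

Lemma col_count_gt0 (C : {set V}) i j :
  (i, j) \in C -> 0 < \sum_i' ((i', j) \in C)%:R :> R.
Proof.
move=> ijC; rewrite (bigD1 i) //= ijC ltr_wpDr ?ltr01 //.
by apply: sumr_ge0 => i' _; rewrite ler0n.
Qed.

Lemma col_weight_gt0 (C : {set V}) v : v \in C -> 0 < col_weight C v.
Proof.
case: v => i j ijC; have n0 : (0 < n)%N by apply: leq_ltn_trans (ltn_ord j).
by rewrite /col_weight ijC mul1r invr_gt0 mulr_gt0 ?ltr0n ?(col_count_gt0 ijC).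
Qed.

Lemma col_weight_eq0 (C : {set V}) v : v \notin C -> col_weight C v = 0.
Proof. by rewrite /col_weight => /negbTE ->; rewrite mul0r. Qed.

Lemma col_weight_ge0 (C : {set V}) v : 0 <= col_weight C v.
Proof.
by have [/col_weight_gt0/ltW|/col_weight_eq0->] := boolP (v \in C).
Qed.

Lemma col_weight_col_sum (C : {set V}) j : (exists i, (i, j) \in C) ->
  \sum_i col_weight C (i, j) = n%:R^-1.
Proof.
case=> i ijC; have n0 : (0 < n)%N by apply: leq_ltn_trans (ltn_ord j).
rewrite /col_weight /= -mulr_suml invfM mulrCA mulfV ?mulr1 //.
by rewrite gt_eqF ?(col_count_gt0 ijC).
Qed.

Lemma col_weight_sum (C : {set V}) : (0 < n)%N ->
  (forall j, exists i, (i, j) \in C) -> \sum_v col_weight C v = 1.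
Proof.
move=> n0 Ccol; rewrite sum_pairE exchange_big /=.
rewrite (eq_bigr _ (fun j _ => col_weight_col_sum (Ccol j))) sumr_const card_ord.
by rewrite -[LHS]mulr_natl mulfV // pnatr_eq0 -lt0n.
Qed.

End ProductOfSimplices.

Theorem proposition3p2 (R : realType) (m n : nat) :
  (0 < m)%N -> (0 < n)%N ->
  forall cells : {set {set 'I_m * 'I_n}},
    is_vertex_subdivision R cells ->
    forall C, C \in cells -> interior_cell R C ->
    exists w : 'rV[R]_m,
      [/\ forall i, 0 < w 0 i,
          \sum_i w 0 i = 1
        & in_relint C (row_mx w (n%:R^-1 *: const_mx 1))].
Proof.
move=> m0 n0 cells _ C _ Cint.
have Ccol j := interior_cell_col j m0 n0 Cint.
exists (\row_i \sum_j col_weight R C (i, j)); split.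
- move=> i; have [j ijC] := interior_cell_row i m0 n0 Cint.
  rewrite mxE (bigD1 j) //= ltr_wpDr ?col_weight_gt0 //.
  by apply: sumr_ge0 => j' _; apply: col_weight_ge0.
- by under eq_bigr do rewrite mxE; rewrite -sum_pairE col_weight_sum.
have -> : n%:R^-1 *: const_mx 1 = \row_j \sum_i col_weight R C (i, j).
  by apply/rowP => j; rewrite !mxE mulr1 (col_weight_col_sum R (Ccol j)).
rewrite -comb_pvertE; apply: in_relint_pos_comb => [v|v|].
- exact: col_weight_gt0.
- exact: col_weight_eq0.
- exact: (col_weight_sum R n0 Ccol).
Qed.
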